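(* Let $n\ge 2$ be an integer. Suppose that for all integers $m,k$ with $2\le m\le n$ and $2\le k\le 2^{m-1}+1$ one has $$v_2\big(s(2^n,2^m-k)\big)=2^n-2^m-(n-m)\Big(2^m-2\Big\lfloor\frac{k}{2}\Big\rfloor\Big)+m-2-v_2\Big(\Big\lfloor\frac{k}{2}\Big\rfloor\Big)+(n-1)\epsilon_k,$$ where $\epsilon_k=0$ if $k$ is even and $\epsilon_k=1$ if $k$ is odd. Then for every integer $t$ with $1\le t\le 2^n$, $$v_2\big(s_{2^n}(2^n,t)\big)=v_2\big(s(2^n,t)\big)\quad\text{and}\quad v_2\big(s_{2^n}(2^n,t)-s(2^n,t)\big)\ge v_2\big(s(2^n,t)\big)+2.$$
   Context: The (unsigned) Stirling numbers of the first kind $s(n,k)$ are defined by $x(x+1)\cdots(x+n-1)=\sum_{k=0}^n s(n,k)x^k$. For a nonnegative integer $m$, $s_m(n,k)$ is defined by $(x+m)(x+m+1)\cdots(x+m+n-1)=\sum_{k=0}^n s_m(n,k)x^k$. $v_2$ is the $2$-adic valuation, with the convention $v_2(0)=+\infty$. *)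

From HB Require Import structures.
From mathcomp Require Import all_boot all_order all_algebra.
Set Implicit Arguments. Unset Strict Implicit. Unset Printing Implicit Defensive.
Import Order.TTheory GRing.Theory Num.Theory.
Local Open Scope ring_scope.

Definition stirling1 (n k : nat) : int :=
  (\prod_(i < n) ('X + (i%:R)%:P) : {poly int})`_k.

Definition stirling1m (m n k : nat) : int :=
  (\prod_(i < n) ('X + ((m + i)%:R)%:P) : {poly int})`_k.

(* 2-adic valuation with values in nat extended by +oo (None = +oo). *)
Definition v2 (x : int) : option nat :=
  if x == 0 then None else Some (logn 2 `|x|%N).

Definition v2_eqZ (x : int) (r : int) : Prop :=
  match v2 x with Some e => (e%:Z = r) | None => False end.

Definition ext_le_add (a : option nat) (c : nat) (b : option nat) : Prop :=
  match a, b with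
  | _, None => True
  | None, Some _ => False
  | Some x, Some y => (x + c <= y)%N
  end.

(* Let N = 2^n.  Since (x + N)(x + N + 1)...(x + 2N - 1) is the rising
   factorial x(x+1)...(x+N-1) evaluated at x + N, the binomial theorem gives
     s_N(N, t) - s(N, t) = sum_{t < j <= N} s(N, j) N^(j-t) C(j, t).
   It suffices to show that every term has 2-adic valuation at least
   v_2 s(N, t) + 2: then the difference does too, and adding it to s(N, t)
   cannot change the valuation (ultrametric inequality).
   Writing G(j) = v_2 s(N, j) + n j, the j-th term has valuation at least
   G(j) - n t + v_2 C(j, t), so we need G(t) + 2 <= G(j) + v_2 C(j, t).
   The hypothesised formula (compared between neighbouring entries of a
   dyadic block 2^(m-1) - 1 <= t <= 2^m - 2, or across two blocks) shows that
   G increases by exactly 1 on odd steps t -> t + 1 and by at least 3 on even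
   double steps t -> t + 2; an elementary lemma on such sequences then gives
   the bound, the only defect (j = t + 1, t odd) being compensated by the
   even binomial coefficient C(t + 1, t) = t + 1.
   The file first collects facts on Stirling numbers and the shift expansion,
   then the valuation and sequence lemmas, the arithmetic of the formula, and
   finally the row of index 2^n under the hypothesis of the theorem. *)

From HB Require Import structures.
From mathcomp Require Import all_boot all_order all_algebra.
From mathcomp Require Import zify ring.
Import Order.TTheory GRing.Theory Num.Theory.
Local Open Scope ring_scope.

Lemma stirling1S n k : stirling1 n.+1 k =
  (if k is k'.+1 then stirling1 n k' else 0) + stirling1 n k * n%:R.
Proof. by rewrite /stirling1 big_ord_recr /= mulrDr coefD coefMX coefMC; case: k. Qed.

(* The rising factorial x(x+1)...(x+n-1) is monic of degree n. *)
Lemma stirling1_gt n k : (n < k)%N -> stirling1 n k = 0.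
Proof.
elim: n k => [|n IHn] [|k] //= ltnk; first by rewrite /stirling1 big_ord0 coef1.
by rewrite stirling1S !IHn ?mul0r ?addr0 // ltnW.
Qed.

Lemma stirling1nn n : stirling1 n n = 1.
Proof.
elim: n => [|n IHn]; first by rewrite /stirling1 big_ord0 coef1.
by rewrite stirling1S IHn stirling1_gt ?mul0r ?addr0.
Qed.

(* s(n+1, n) = 0 + 1 + ... + n. *)
Lemma stirling1_subdiag n : stirling1 n.+1 n = 'C(n.+1, 2)%:R.
Proof.
elim: n => [|n IHn]; first by rewrite stirling1S stirling1nn mul1r add0r.
by rewrite stirling1S IHn stirling1nn mul1r (binS n.+1 1) bin1 natrD addrC.
Qed.

Lemma coef_XaddC_exp (R : nzRingType) (c : R) j t :
  (('X + c%:P) ^+ j)`_t = c ^+ (j - t) *+ 'C(j, t).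
Proof.
elim: j t => [|j IHj] [|t]; rewrite ?expr0 ?coef1 ?bin0n //.
  by rewrite exprSr mulrDr coefD coefMX coefMC IHj !bin0 !subn0 exprSr add0r.
rewrite exprSr mulrDr coefD coefMX coefMC /= !IHj subSS binS mulrnDr addrC.
congr (_ + _); have [ltj|lej] := ltnP t j.
  by rewrite mulrnAl -exprSr subnSK.
by rewrite bin_small ?mulr0n ?mul0r // ltnS.
Qed.

Local Notation rising M := (\prod_(i < M) ('X + (i%:R)%:P) : {poly int}).

Lemma size_rising M : size (rising M) = M.+1.
Proof.
have -> : rising M = \prod_(i < M) ('X - (- (i%:R : int))%:P).
  by apply: eq_bigr => i _; rewrite polyCN opprK.
by rewrite size_prod_XsubC [index_enum _]unlock -enumT size_enum_ord.
Qed.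

Lemma rising_shift a M :
  (\prod_(i < M) ('X + ((a + i)%:R)%:P) : {poly int}) = rising M \Po ('X + (a%:R)%:P).
Proof.
elim: M => [|M IHM]; first by rewrite !big_ord0 comp_polyC.
rewrite !big_ord_recr /= comp_polyM IHM comp_polyD comp_polyX comp_polyC.
by rewrite natrD rmorphD addrA.
Qed.

Lemma stirling1m_expand a M t : stirling1m a M t =
  \sum_(j < M.+1) stirling1 M j * ((a%:R : int) ^+ (j - t) *+ 'C(j, t)).
Proof.
rewrite /stirling1m rising_shift coef_comp_poly size_rising.
by apply: eq_bigr => j _; rewrite coef_XaddC_exp.
Qed.

Section IntValuation.
Variable p : nat.
Hypothesis p_prime : prime p.

Lemma pfactor_dvdz k (x : int) :
  x != 0 -> ((p ^ k)%:Z %| x)%Z = (k <= logn p `|x|)%N.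
Proof. by move=> nz_x; rewrite dvdzE absz_nat pfactor_dvdn // absz_gt0. Qed.

Lemma logn_addz (x y : int) : x != 0 ->
  ((p ^ (logn p `|x|).+1)%:Z %| y)%Z ->
  x + y != 0 /\ logn p `|x + y| = logn p `|x|.
Proof.
move=> nz_x dvd_y; set a := logn p `|x|.
have dvd_x : ((p ^ a)%:Z %| x)%Z by rewrite pfactor_dvdz.
have dvdS_x : ((p ^ a.+1)%:Z %| x)%Z = false by rewrite pfactor_dvdz // ltnn.
have nz_xy : x + y != 0.
  apply: contraFN dvdS_x => /eqP xy0.
  have -> : x = - y by apply/eqP; rewrite -addr_eq0 xy0.
  by rewrite rpredN.
have dvd_y' : ((p ^ a)%:Z %| y)%Z.
  by apply: dvdz_trans dvd_y; rewrite dvdzE !absz_nat dvdn_exp2l.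
split=> //; apply/eqP; rewrite eqn_leq -(pfactor_dvdz a _ nz_xy) rpredD // andbT.
rewrite leqNgt -(pfactor_dvdz a.+1 _ nz_xy); apply: contraFN dvdS_x => dvd_xy.
by rewrite -(addrK y x) rpredB.
Qed.

End IntValuation.

Lemma growth_gap (G : nat -> nat) (N : nat) : ~~ odd N ->
  (forall t, odd t -> (t < N)%N -> G t.+1 = (G t).+1) ->
  (forall t, ~~ odd t -> (0 < t)%N -> (t.+2 <= N)%N -> (G t + 3 <= G t.+2)%N) ->
  forall t j, (0 < t)%N -> (t < j)%N -> (j <= N)%N ->
    (G t + 2 <= G j + ((j == t.+1) && odd t))%N.
Proof.
move=> even_N odd_step even_step.
have step i : (0 < i)%N -> (i < N)%N -> (G i + 1 + ~~ odd i <= G i.+1)%N.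
  move=> i_gt0 lt_iN; case: (boolP (odd i)) => [odd_i|even_i].
    by rewrite odd_step // addn0 addn1.
  have lt_i1N : (i.+1 < N)%N.
    by rewrite ltn_neqAle lt_iN andbT; apply: contraNneq even_N => <-; rewrite /= even_i.
  have := even_step i even_i i_gt0 lt_i1N.
  by rewrite (odd_step i.+1) /= ?even_i //; lia.
have grow d i : (0 < i)%N -> (i + d <= N)%N -> (G i + d <= G (i + d))%N.
  move=> i_gt0; elim: d => [|d IHd] le_idN; first by rewrite !addn0.
  have := step (i + d)%N (leq_trans i_gt0 (leq_addr _ _)).
  rewrite addnS in le_idN *; have := IHd (ltnW le_idN); lia.
move=> t j t_gt0 lt_tj le_jN; have := step t t_gt0 (leq_trans lt_tj le_jN).
have [-> | ne_j] := eqVneq j t.+1; first by case: (odd t) => /=; lia.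
have lt_t1j : (t.+1 < j)%N by rewrite ltn_neqAle lt_tj eq_sym ne_j.
have := step t.+1 isT (leq_trans lt_t1j le_jN).
have := grow (j - t.+2)%N t.+2 isT; rewrite subnKC // => /(_ le_jN).
by rewrite /= addn0; case: (odd t) => /=; lia.
Qed.

Definition stirling_val_formula (n m k : nat) : int :=
  (2 ^ n)%:Z - (2 ^ m)%:Z - (n - m)%:Z * ((2 ^ m)%:Z - 2 * (k %/ 2)%:Z)
  + m%:Z - 2 - (logn 2 (k %/ 2))%:Z + (n - 1)%:Z * (odd k)%:Z.

Lemma formula_odd_even n m q :
  stirling_val_formula n m q.*2.+1 = stirling_val_formula n m q.*2 + (n - 1)%:Z.
Proof.
rewrite /stirling_val_formula -[q.*2.+1]addn1 -!muln2 !divnMDl // !mulnK //.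
by rewrite divn_small // addn0 oddD oddM andbF /= mulr1 mulr0 addr0.
Qed.

Lemma formula_even_step n m q : (0 < q)%N ->
  stirling_val_formula n m q.-1.*2 = stirling_val_formula n m q.*2
    - 2 * (n - m)%:Z + (logn 2 q)%:Z - (logn 2 q.-1)%:Z.
Proof.
move=> q_gt0; rewrite /stirling_val_formula -!muln2 !mulnK // !oddM andbF.
by rewrite /= !andbF !mulr0 (predn_int q_gt0); ring.
Qed.

Lemma formula_block_step n m : (0 < m)%N -> (m < n)%N ->
  stirling_val_formula n m.+1 (2 ^ m) =
  stirling_val_formula n m 2%N - 2 * n%:Z + m%:Z + 2.
Proof.
case: m => // m _ lt_mn; rewrite /stirling_val_formula.
rewrite [(2 ^ m.+1)%N]expnS mulKn // pfactorK // oddM /= logn1.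
rewrite !expnS divnn /= -!subzn ?(ltnW lt_mn) ?(ltnW (ltnW lt_mn)) //; last lia.
rewrite !PoszM !intS; ring.
Qed.

Lemma formula_top n : stirling_val_formula n n 2%N = n%:Z - 2.
Proof. by rewrite /stirling_val_formula subnn divnn /= logn1; ring. Qed.

(* s(2^n, 2^n - 1) = C(2^n, 2) = 2^(n-1) (2^n - 1) has 2-adic valuation n - 1. *)
Lemma stirling1_pow2_pred n : (0 < n)%N ->
  stirling1 (2 ^ n) (2 ^ n).-1 != 0 /\
  logn 2 `|stirling1 (2 ^ n) (2 ^ n).-1| = n.-1.
Proof.
move=> n_gt0; have N_gt0 : (0 < 2 ^ n)%N by rewrite expn_gt0.
have odd_N1 : odd (2 ^ n).-1.
  by rewrite -subn1 oddB ?oddX // orbC; case: (n) n_gt0.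
have val_N : stirling1 (2 ^ n) (2 ^ n).-1 = (2 ^ n.-1 * (2 ^ n).-1)%:R.
  rewrite -{1}(prednK N_gt0) stirling1_subdiag (prednK N_gt0) bin2.
  by rewrite -{1}(prednK n_gt0) expnS -mulnA mul2n doubleK.
have N1_gt0 : (0 < (2 ^ n).-1)%N by case: (_.-1) odd_N1.
rewrite val_N natz absz_nat eqz_nat -lt0n muln_gt0 expn_gt0 N1_gt0.
by rewrite lognM ?expn_gt0 // pfactorK // logn_coprime ?addn0 // coprime2n.
Qed.

Lemma odd_compl_pow2 {m t k} : (0 < m)%N -> (t + k = 2 ^ m)%N -> odd k = odd t.
Proof.
move=> m_gt0 /(congr1 odd); rewrite oddD oddX (gtn_eqF m_gt0) /=.
by case: (odd t); case: (odd k).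
Qed.

Lemma dyadic_block n t : (0 < t)%N -> (t + 2 <= 2 ^ n)%N ->
  exists m k, [/\ (2 <= m)%N, (m <= n)%N, (2 <= k)%N,
     (k <= 2 ^ m.-1 + 1)%N & (t + k = 2 ^ m)%N].
Proof.
move=> t_gt0 le_t2N; set L := trunc_log 2 t.+1.
have /andP[low up] : (2 ^ L <= t.+1 < 2 ^ L.+1)%N by apply: trunc_log_bounds.
have L_gt0 : (0 < L)%N by rewrite trunc_log_gt0 ltnS.
have lt_Ln : (L < n)%N by rewrite -(@ltn_exp2l 2) //; lia.
exists L.+1, (2 ^ L.+1 - t)%N; split => //=; try lia.
by move: up; rewrite !expnS; lia.
Qed.

Section PowerOfTwoRow.

Variable n : nat.
Hypothesis n_ge2 : (2 <= n)%N.

Hypothesis val_formula : forall m k : nat, (2 <= m)%N -> (m <= n)%N ->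
  (2 <= k)%N -> (k <= 2 ^ m.-1 + 1)%N ->
  v2_eqZ (stirling1 (2 ^ n) (2 ^ m - k)) (stirling_val_formula n m k).

Local Notation N := (2 ^ n)%N.
Local Notation val t := (logn 2 `|stirling1 (2 ^ n) t|).

Lemma block_val {m k} : (2 <= m)%N -> (m <= n)%N ->
  (2 <= k)%N -> (k <= 2 ^ m.-1 + 1)%N ->
  stirling1 N (2 ^ m - k) != 0 /\ (val (2 ^ m - k))%:Z = stirling_val_formula n m k.
Proof.
move=> m_ge2 le_mn k_ge2 k_le; move: (val_formula _ _ m_ge2 le_mn k_ge2 k_le).
by rewrite /v2_eqZ /v2; case: eqP.
Qed.

Lemma even_N : ~~ odd N.
Proof. by rewrite oddX negb_or /= -lt0n ltnW. Qed.

Lemma val_top : val N = 0%N.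
Proof. by rewrite stirling1nn. Qed.

Lemma stirling1_row_neq0 t : (0 < t)%N -> (t <= N)%N -> stirling1 N t != 0.
Proof.
move=> t_gt0 le_tN.
have [-> | ne_tN] := eqVneq t N; first by rewrite stirling1nn oner_neq0.
have [-> | ne_t1N] := eqVneq t N.-1.
  by case: (@stirling1_pow2_pred n (ltnW n_ge2)).
have [m [k [m_ge2 le_mn k_ge2 k_le tk]]] := @dyadic_block n t t_gt0 ltac:(lia).
by have [] := block_val m_ge2 le_mn k_ge2 k_le; rewrite -tk addnK.
Qed.

(* On an odd step the valuation drops by exactly n - 1: at the top of the row
   this is v_2 s(2^n, 2^n - 1) = n - 1; inside a block it compares the entries
   k = 2q + 1 and k = 2q of the formula. *)
Lemma val_odd_step t : odd t -> (t < N)%N ->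
  (val t.+1 + n * t.+1 = (val t + n * t).+1)%N.
Proof.
move=> odd_t lt_tN; rewrite mulnS.
have [eq_t1N | ne_t1N] := eqVneq t.+1 N.
  have [_ val_N1] := @stirling1_pow2_pred n (ltnW n_ge2).
  have eq_t : t = N.-1 by rewrite -eq_t1N.
  by rewrite eq_t1N val_top eq_t val_N1; lia.
have [m [k [m_ge2 le_mn k_ge2 k_le tk]]] :=
  @dyadic_block n t (odd_gt0 odd_t) ltac:(lia).
have odd_k : odd k by rewrite (odd_compl_pow2 (ltnW m_ge2) tk).
have k_eq : k = (k./2).*2.+1 by rewrite -[LHS]odd_double_half odd_k.
have [_ val_t] := block_val m_ge2 le_mn k_ge2 k_le.
have k1_ge2 : (2 <= k.-1)%N by move: k_ge2 odd_k; clear; case: k => [|[|[|k]]].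
have [_ val_t1] := block_val m_ge2 le_mn k1_ge2 (leq_trans (leq_pred k) k_le).
rewrite (_ : 2 ^ m - k = t)%N in val_t; last lia.
rewrite (_ : 2 ^ m - k.-1 = t.+1)%N in val_t1; last lia.
rewrite k_eq formula_odd_even in val_t; rewrite k_eq /= in val_t1.
lia.
Qed.

(* On an even double step the valuation drops by at most 2n - 3: at the top
   of the row v_2 s(2^n, 2^n - 2) = n - 2; at a block boundary (k = 2) we
   move to the first entry of the next block; otherwise we compare k = 2q
   with k = 2q - 2 and use v_2(q - 1) <= m - 2. *)
Lemma val_even_step t : ~~ odd t -> (0 < t)%N -> (t.+2 <= N)%N ->
  (val t + n * t + 3 <= val t.+2 + n * t.+2)%N.
Proof.
move=> even_t t_gt0 le_t2N; rewrite !mulnS.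
have [eq_t2N | ne_t2N] := eqVneq t.+2 N.
  have two_le : (2 <= 2 ^ n.-1 + 1)%N by rewrite addn1 ltnS expn_gt0.
  have [_ val_t] := block_val n_ge2 (leqnn n) (leqnn 2) two_le.
  rewrite formula_top (_ : N - 2 = t)%N in val_t; last lia.
  by rewrite eq_t2N val_top; lia.
have [m [k [m_ge2 le_mn k_ge2 k_le tk]]] := @dyadic_block n t t_gt0 ltac:(lia).
have even_k : ~~ odd k by rewrite (odd_compl_pow2 (ltnW m_ge2) tk).
have k_eq : k = (k./2).*2 by rewrite -[LHS]odd_double_half (negbTE even_k).
set q := k./2 in k_eq.
have [_ val_t] := block_val m_ge2 le_mn k_ge2 k_le.
rewrite (_ : 2 ^ m - k = t)%N in val_t; last lia.
have [eq_k2 | ne_k2] := eqVneq k 2%N.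
  have lt_mn : (m < n)%N.
    rewrite ltn_neqAle le_mn andbT; apply: contraNneq ne_t2N => eq_mn.
    by rewrite -eq_mn -tk eq_k2 addn2.
  have two_le : (2 <= 2 ^ m)%N by rewrite -{1}(expn1 2) leq_exp2l // ltnW.
  have [_ val_t2] :=
    @block_val m.+1 (2 ^ m) (ltnW m_ge2) lt_mn two_le (leq_addr _ _).
  rewrite formula_block_step ?(ltnW m_ge2) // in val_t2; rewrite eq_k2 in val_t.
  rewrite (_ : 2 ^ m.+1 - 2 ^ m = t.+2)%N ?expnS in val_t2; last lia.
  lia.
have q_ge2 : (2 <= q)%N by lia.
have m_ge3 : (3 <= m)%N.
  rewrite ltnNge; apply: contraNN ne_k2 => le_m2.
  by move: k_le; rewrite (_ : m = 2)%N /=; lia.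
have [_ val_t2] := @block_val m (k - 2)%N m_ge2 le_mn ltac:(lia) ltac:(lia).
rewrite (_ : 2 ^ m - (k - 2) = t.+2)%N in val_t2; last lia.
rewrite (_ : k - 2 = q.-1.*2)%N in val_t2; last lia.
rewrite (formula_even_step _ _ _ (ltnW q_ge2)) -k_eq in val_t2.
have log_q1 : (logn 2 q.-1 <= m - 2)%N.
  have q1_gt0 : (0 < q.-1)%N by lia.
  rewrite -(@leq_exp2l 2) //.
  apply: leq_trans (dvdn_leq q1_gt0 (pfactor_dvdnn 2 q.-1)) _.
  have pow_m1 : (2 ^ m.-1 = 2 * 2 ^ (m - 2))%N by rewrite -expnS; congr expn; lia.
  by move: k_le; rewrite pow_m1; lia.
lia.
Qed.

Lemma shift_term_dvd t j : (0 < t)%N -> (t < j)%N -> (j <= N)%N ->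
  ((2 ^ (val t + 2))%:Z %| stirling1 N j * ((N%:R : int) ^+ (j - t) *+ 'C(j, t)))%Z.
Proof.
move=> t_gt0 lt_tj le_jN; set b := (j == t.+1) && odd t.
have gap := @growth_gap (fun i => val i + n * i)%N N even_N
  val_odd_step val_even_step t j t_gt0 lt_tj le_jN.
have dvd_bin : (2 ^ b %| 'C(j, t))%N.
  rewrite /b; case: eqP => [-> | _] /=; last exact: dvd1n.
  case: (boolP (odd t)) => [odd_t | _]; last exact: dvd1n.
  by rewrite binSn expn1 dvdn2 /= odd_t.
rewrite -natrX -mulr_natr -natrM natz dvdzE abszM !absz_nat.
apply: dvdn_trans (dvdn_mul (pfactor_dvdnn 2 _) (dvdn_mul (dvdnn _) dvd_bin)).
rewrite -expnM -!expnD dvdn_exp2l // mulnBr.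
have : (n * t <= n * j)%N by rewrite leq_mul2l ltnW ?orbT.
lia.
Qed.

Lemma shift_difference_dvd t : (0 < t)%N -> (t <= N)%N ->
  ((2 ^ (val t + 2))%:Z %| stirling1m N N t - stirling1 N t)%Z.
Proof.
move=> t_gt0 le_tN; rewrite stirling1m_expand.
rewrite (bigD1 (Ordinal (le_tN : (t < N.+1)%N))) //=.
rewrite subnn expr0 binn mulr1n mulr1 addrC addrK.
apply: rpred_sum => j /= ne_jt.
have [lt_jt | le_tj] := ltnP j t; first by rewrite bin_small // mulr0n mulr0 rpred0.
apply: shift_term_dvd => //; last by rewrite -ltnS.
rewrite ltn_neqAle le_tj andbT; apply: contraNneq ne_jt => eq_tj.
by apply/eqP/val_inj; rewrite /= eq_tj.
Qed.

End PowerOfTwoRow.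

Theorem lemma2p4 (n : nat) (hn : (2 <= n)%N)
  (H : forall m k : nat, (2 <= m)%N -> (m <= n)%N ->
       (2 <= k)%N -> (k <= 2 ^ m.-1 + 1)%N ->
       v2_eqZ (stirling1 (2 ^ n) (2 ^ m - k))
         ((2 ^ n)%:Z - (2 ^ m)%:Z
          - (n - m)%:Z * ((2 ^ m)%:Z - 2 * (k %/ 2)%:Z)
          + m%:Z - 2 - (logn 2 (k %/ 2))%:Z
          + (n - 1)%:Z * (odd k)%:Z)) :
  forall t : nat, (1 <= t)%N -> (t <= 2 ^ n)%N ->
    v2 (stirling1m (2 ^ n) (2 ^ n) t) = v2 (stirling1 (2 ^ n) t) /\
    ext_le_add (v2 (stirling1 (2 ^ n) t)) 2
      (v2 (stirling1m (2 ^ n) (2 ^ n) t - stirling1 (2 ^ n) t)).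
Proof.
move=> t t_gt0 le_tN.
set s := stirling1 (2 ^ n) t; set a := logn 2 `|s|.
set D := stirling1m (2 ^ n) (2 ^ n) t - s.
have nz_s : s != 0 := @stirling1_row_neq0 n hn H t t_gt0 le_tN.
have dvd_D : ((2 ^ (a + 2))%:Z %| D)%Z :=
  @shift_difference_dvd n hn H t t_gt0 le_tN.
have [nz_sD val_sD] : s + D != 0 /\ logn 2 `|s + D| = a.
  apply: logn_addz => //; apply: dvdz_trans dvd_D.
  by rewrite dvdzE !absz_nat dvdn_exp2l // addn2.
have -> : stirling1m (2 ^ n) (2 ^ n) t = s + D by rewrite addrC subrK.
rewrite /v2 (negbTE nz_s) (negbTE nz_sD) val_sD; split => //=.
by case: eqP => // /eqP nz_D; rewrite -pfactor_dvdz.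
Qed.
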